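(* Let $n\ge2$ be an integer, $j$ a positive integer, $\alpha=1-\frac1n$, $\gamma_n=\frac12+\frac1n$, $\beta\le 0$ real with $Q\equiv\alpha-\beta-1\ge1$. For $z>0$ set $y=-jz^n$, $F(t)=yt+Q\log\frac{t}{t+1}$, $G(u)=-u^2+2(-y)^{1/2}u+(2Q+\gamma_n)\log u$, $t_0(z)=\frac{-1+\sqrt{1+4Q/(-y)}}{2}$, $u_0(z)=\frac{(-y)^{1/2}}{2}(1+\sqrt{1+\frac{4Q+2\gamma_n}{-y}})$, and $$\widehat F(z)=-\frac{jz^n}{2}+F(t_0(z)),\qquad \widehat G(z)=-\frac{jz^n}{2}+G(u_0(z)),$$ where $F$ and $G$ are evaluated with $y=-jz^n$. Then for every $\eta\ge0$, on the region $z\ge\eta^{2/n}$ the function $\widehat F(z)+\eta z^{n/2}$ is decreasing and the function $\widehat G(z)-\eta z^{n/2}$ is increasing. *)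

From Stdlib Require Import Reals Lra.
Open Scope R_scope.

Definition alpha (n : nat) : R := 1 - 1 / INR n.
Definition gamma_n (n : nat) : R := 1 / 2 + 1 / INR n.
Definition Qof (n : nat) (beta : R) : R := alpha n - beta - 1.

(* Real power x^a for x >= 0 with the convention 0^a = 0 (a <> 0);
   Stdlib's Rpower 0 a = 1, so we patch the value at 0. *)
Definition powR0 (x a : R) : R :=
  if Req_EM_T x 0 then 0 else Rpower x a.

Definition yof (n j : nat) (z : R) : R := - (INR j * z ^ n).

Definition Ffun (Q y t : R) : R := y * t + Q * ln (t / (t + 1)).
Definition Gfun (n : nat) (Q y u : R) : R :=
  - u ^ 2 + 2 * sqrt (- y) * u + (2 * Q + gamma_n n) * ln u.

Definition t0 (n j : nat) (Q z : R) : R :=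
  (-1 + sqrt (1 + 4 * Q / (- yof n j z))) / 2.
Definition u0 (n j : nat) (Q z : R) : R :=
  sqrt (- yof n j z) / 2 *
  (1 + sqrt (1 + (4 * Q + 2 * gamma_n n) / (- yof n j z))).

Definition Fhat (n j : nat) (Q z : R) : R :=
  - (INR j * z ^ n) / 2 + Ffun Q (yof n j z) (t0 n j Q z).
Definition Ghat (n j : nat) (Q z : R) : R :=
  - (INR j * z ^ n) / 2 + Gfun n Q (yof n j z) (u0 n j Q z).

From Stdlib Require Import Reals Lra Lia Psatz.
Open Scope R_scope.

(* Put s = j z^n and c = 2Q + gamma_n.  Since ln is concave, t0 and u0 are the
   critical points, hence the maximisers, of concave functions, and
   Fhat = -s/2 + max_t (-s t + Q ln (t/(t+1))),
   Ghat =  s/2 + max_u (c ln u - (u - sqrt s)^2).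
   The first maximum decreases with s because -s t does for every t > 0; the
   second increases with s because shifting u by the growth of sqrt s keeps the
   square and increases ln u.  Finally, eta <= z^(n/2) and j >= 1 give
   eta * (growth of z^(n/2)) <= (growth of s)/2, so the eta-terms cannot undo
   the monotonicity of -s/2 and s/2. *)

Lemma ln_sub_ln_le (a b : R) : 0 < a -> 0 < b -> ln a - ln b <= (a - b) / b.
Proof.
  intros Ha Hb.
  pose proof (exp_ineq1_le (ln (a / b))) as Hexp.
  rewrite exp_ln in Hexp by (apply Rdiv_lt_0_compat; lra).
  unfold Rdiv in *.
  rewrite ln_mult, ln_Rinv in Hexp by (try apply Rinv_0_lt_compat; lra).
  replace ((a - b) * / b) with (a * / b - 1) by (field; lra).
  lra.
Qed.

Section MaximumOfF.

Variable Q : R.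
Hypothesis Q_pos : 0 < Q.

Definition tcrit (s : R) : R := (-1 + sqrt (1 + 4 * Q / s)) / 2.

Definition Fmax (s : R) : R := Ffun Q (- s) (tcrit s).

Lemma tcrit_pos (s : R) : 0 < s -> 0 < tcrit s.
Proof.
  intros Hs; unfold tcrit.
  assert (0 < 4 * Q / s) by (apply Rdiv_lt_0_compat; lra).
  assert (sqrt 1 < sqrt (1 + 4 * Q / s)) by (apply sqrt_lt_1; lra).
  rewrite sqrt_1 in *; lra.
Qed.

Lemma tcrit_critical (s : R) : 0 < s -> s * tcrit s * (tcrit s + 1) = Q.
Proof.
  intros Hs; unfold tcrit.
  assert (0 < 4 * Q / s) by (apply Rdiv_lt_0_compat; lra).
  pose proof (sqrt_sqrt (1 + 4 * Q / s)) as Hsq.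
  set (S := sqrt (1 + 4 * Q / s)) in *.
  replace (s * ((-1 + S) / 2) * ((-1 + S) / 2 + 1)) with (s * (S * S - 1) / 4)
    by field.
  rewrite Hsq by lra; field; lra.
Qed.

Lemma Ffun_le_Fmax (s t : R) : 0 < s -> 0 < t -> Ffun Q (- s) t <= Fmax s.
Proof.
  intros Hs Ht; unfold Fmax, Ffun.
  pose proof (tcrit_pos s Hs) as Ht0.
  pose proof (tcrit_critical s Hs) as Hcrit.
  set (t0 := tcrit s) in *; clearbody t0.
  assert (Hln := ln_sub_ln_le (t / (t + 1)) (t0 / (t0 + 1))
                   ltac:(apply Rdiv_lt_0_compat; lra)
                   ltac:(apply Rdiv_lt_0_compat; lra)).
  assert (Htangent : Q * ((t / (t + 1) - t0 / (t0 + 1)) / (t0 / (t0 + 1)))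
                     = s * (t - t0) * (t0 + 1) / (t + 1))
    by (rewrite <- Hcrit; field; lra).
  assert (Hgap : s * (t - t0) * (t0 + 1) / (t + 1) - s * (t - t0)
                 = - (s * (t - t0) ^ 2 / (t + 1))) by (field; lra).
  assert (0 <= s * (t - t0) ^ 2 / (t + 1))
    by (apply Rmult_le_pos; [apply Rmult_le_pos; [lra | apply pow2_ge_0]
                             | apply Rlt_le, Rinv_0_lt_compat; lra]).
  apply (Rmult_le_compat_l Q) in Hln; lra.
Qed.

Lemma Fmax_decreasing (s1 s2 : R) : 0 < s1 < s2 -> Fmax s2 < Fmax s1.
Proof.
  intros [Hs1 Hs12].
  pose proof (tcrit_pos s2 ltac:(lra)) as Ht2.
  pose proof (Ffun_le_Fmax s1 (tcrit s2) Hs1 Ht2).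
  assert (0 < (s2 - s1) * tcrit s2) by (apply Rmult_lt_0_compat; lra).
  unfold Fmax, Ffun in *; lra.
Qed.

End MaximumOfF.

Section MaximumOfG.

Variable c : R.
Hypothesis c_pos : 0 < c.

Definition ucrit (s : R) : R := sqrt s / 2 * (1 + sqrt (1 + 2 * c / s)).

Definition Gmax (s : R) : R := c * ln (ucrit s) - (ucrit s - sqrt s) ^ 2.

Lemma ucrit_spec (s : R) : 0 < s ->
  sqrt s < ucrit s /\ 2 * ucrit s * (ucrit s - sqrt s) = c.
Proof.
  intros Hs; unfold ucrit.
  assert (0 < 2 * c / s) by (apply Rdiv_lt_0_compat; lra).
  pose proof (sqrt_sqrt (1 + 2 * c / s)) as HW2.
  pose proof (sqrt_sqrt s) as Hr2.
  assert (HW1 : sqrt 1 < sqrt (1 + 2 * c / s)) by (apply sqrt_lt_1; lra).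
  rewrite sqrt_1 in HW1.
  assert (Hr : 0 < sqrt s) by (apply sqrt_lt_R0; lra).
  set (W := sqrt (1 + 2 * c / s)) in *; set (r := sqrt s) in *.
  split; [nra |].
  replace (2 * (r / 2 * (1 + W)) * (r / 2 * (1 + W) - r))
    with (r * r * (W * W - 1) / 2) by field.
  rewrite HW2, Hr2 by lra; field; lra.
Qed.

Lemma le_Gmax (s u : R) : 0 < s -> 0 < u ->
  c * ln u - (u - sqrt s) ^ 2 <= Gmax s.
Proof.
  intros Hs Hu; unfold Gmax.
  destruct (ucrit_spec s Hs) as [Hr Hcrit].
  pose proof (sqrt_pos s).
  set (u0 := ucrit s) in *; set (r := sqrt s) in *.
  assert (Hln := ln_sub_ln_le u u0 Hu ltac:(lra)).
  apply (Rmult_le_compat_l c) in Hln; [| lra].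
  replace (c * ((u - u0) / u0)) with (2 * (u0 - r) * (u - u0)) in Hln
    by (rewrite <- Hcrit; field; lra).
  pose proof (pow2_ge_0 (u - u0)); nra.
Qed.

Lemma Gmax_increasing (s1 s2 : R) : 0 < s1 < s2 -> Gmax s1 < Gmax s2.
Proof.
  intros [Hs1 Hs12].
  destruct (ucrit_spec s1 Hs1) as [Hr1 _].
  assert (Hshift : sqrt s1 < sqrt s2) by (apply sqrt_lt_1; lra).
  pose proof (sqrt_pos s1).
  pose proof (le_Gmax s2 (ucrit s1 + (sqrt s2 - sqrt s1)) ltac:(lra) ltac:(lra)).
  assert (ln (ucrit s1) < ln (ucrit s1 + (sqrt s2 - sqrt s1)))
    by (apply ln_increasing; lra).
  assert (c * ln (ucrit s1) < c * ln (ucrit s1 + (sqrt s2 - sqrt s1)))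
    by (apply Rmult_lt_compat_l; lra).
  unfold Gmax in *.
  replace (ucrit s1 + (sqrt s2 - sqrt s1) - sqrt s2) with (ucrit s1 - sqrt s1)
    in * by ring.
  lra.
Qed.

End MaximumOfG.

Lemma Fhat_eq (n j : nat) (Q z : R) :
  Fhat n j Q z = - (INR j * z ^ n) / 2 + Fmax Q (INR j * z ^ n).
Proof. unfold Fhat, Fmax, t0, tcrit, yof; now rewrite Ropp_involutive. Qed.

Lemma Ghat_eq (n j : nat) (Q z : R) : 0 < INR j * z ^ n ->
  Ghat n j Q z = INR j * z ^ n / 2 + Gmax (2 * Q + gamma_n n) (INR j * z ^ n).
Proof.
  intros Hs; unfold Ghat, Gfun, Gmax, u0, ucrit, yof.
  rewrite Ropp_involutive.
  replace (4 * Q + 2 * gamma_n n) with (2 * (2 * Q + gamma_n n)) by ring.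
  pose proof (sqrt_sqrt (INR j * z ^ n)); nra.
Qed.

Lemma Rpower_half_sq (n : nat) (z : R) : 0 < z ->
  Rpower z (INR n / 2) ^ 2 = z ^ n.
Proof.
  intros Hz.
  rewrite <- Rpower_pow, Rpower_mult by (unfold Rpower; apply exp_pos).
  replace (INR n / 2 * INR 2) with (INR n) by (simpl; field).
  now apply Rpower_pow.
Qed.

Lemma le_Rpower_of_powR0_le (n : nat) (eta z : R) : (0 < n)%nat -> 0 <= eta ->
  powR0 eta (2 / INR n) <= z -> eta <= Rpower z (INR n / 2).
Proof.
  intros Hn He Hz; unfold powR0 in Hz.
  assert (0 < INR n) by (apply lt_0_INR; lia).
  destruct (Req_EM_T eta 0) as [-> | Hne].
  - left; unfold Rpower; apply exp_pos.
  - assert (Hp : Rpower (Rpower eta (2 / INR n)) (INR n / 2)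
                 <= Rpower z (INR n / 2)).
    { apply Rle_Rpower_l; [apply Rlt_le, Rdiv_lt_0_compat; lra |].
      split; [unfold Rpower; apply exp_pos | exact Hz]. }
    rewrite Rpower_mult in Hp.
    replace (2 / INR n * (INR n / 2)) with 1 in Hp by (field; lra).
    rewrite Rpower_1 in Hp by lra; exact Hp.
Qed.

Lemma mul_sub_le_half_sub_sq (k e a b : R) : 1 <= k -> 0 <= e <= a -> a <= b ->
  e * (b - a) <= k * (b ^ 2 - a ^ 2) / 2.
Proof.
  intros Hk [He Hea] Hab.
  assert (e * (b - a) <= a * (b - a)) by nra.
  assert (a * (b - a) <= (b ^ 2 - a ^ 2) / 2) by nra.
  assert (0 <= b ^ 2 - a ^ 2) by nra.
  nra.
Qed.

Lemma eta_growth_le_half_scale_growth (n j : nat) (eta z1 z2 : R) :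
  (0 < n)%nat -> (1 <= j)%nat -> 0 <= eta -> 0 < z1 ->
  powR0 eta (2 / INR n) <= z1 -> z1 < z2 ->
  0 < INR j * z1 ^ n < INR j * z2 ^ n /\
  eta * (Rpower z2 (INR n / 2) - Rpower z1 (INR n / 2))
    <= (INR j * z2 ^ n - INR j * z1 ^ n) / 2.
Proof.
  intros Hn Hj He Hz1 Hez Hz12.
  assert (Hk : 1 <= INR j) by (apply (le_INR 1); lia).
  assert (0 < INR n) by (apply lt_0_INR; exact Hn).
  assert (Hp12 : Rpower z1 (INR n / 2) < Rpower z2 (INR n / 2))
    by (apply Rlt_Rpower_l; [apply Rdiv_lt_0_compat |]; lra).
  assert (Hp1 : 0 < Rpower z1 (INR n / 2)) by (unfold Rpower; apply exp_pos).
  pose proof (le_Rpower_of_powR0_le n eta z1 Hn He Hez).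
  rewrite <- !(Rpower_half_sq n) by lra.
  set (p1 := Rpower z1 (INR n / 2)) in *; set (p2 := Rpower z2 (INR n / 2)) in *.
  assert (0 < INR j * p1 ^ 2 < INR j * p2 ^ 2).
  { split; [apply Rmult_lt_0_compat; [lra | apply pow_lt; lra] |].
    apply Rmult_lt_compat_l; [lra | nra]. }
  pose proof (mul_sub_le_half_sub_sq (INR j) eta p1 p2 Hk ltac:(lra) ltac:(lra)).
  split; [assumption | lra].
Qed.

Theorem lemma4p7 (n j : nat) (beta eta : R) :
  (2 <= n)%nat -> (1 <= j)%nat -> beta <= 0 -> 1 <= Qof n beta -> 0 <= eta ->
  (forall z1 z2 : R, 0 < z1 -> powR0 eta (2 / INR n) <= z1 -> z1 < z2 ->
     Fhat n j (Qof n beta) z2 + eta * Rpower z2 (INR n / 2)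
       < Fhat n j (Qof n beta) z1 + eta * Rpower z1 (INR n / 2)) /\
  (forall z1 z2 : R, 0 < z1 -> powR0 eta (2 / INR n) <= z1 -> z1 < z2 ->
     Ghat n j (Qof n beta) z1 - eta * Rpower z1 (INR n / 2)
       < Ghat n j (Qof n beta) z2 - eta * Rpower z2 (INR n / 2)).
Proof.
  intros Hn Hj _ HQ He.
  assert (Hn0 : (0 < n)%nat) by lia.
  assert (Hc : 0 < 2 * Qof n beta + gamma_n n).
  { assert (0 < 1 / INR n) by (apply Rdiv_lt_0_compat; [lra | apply lt_0_INR; lia]).
    unfold gamma_n; lra. }
  split; intros z1 z2 Hz1 Hez Hz12;
    destruct (eta_growth_le_half_scale_growth n j eta z1 z2 Hn0 Hj He Hz1 Hez Hz12)
      as [Hs Hgrowth].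
  - pose proof (Fmax_decreasing (Qof n beta) ltac:(lra) _ _ Hs).
    rewrite !Fhat_eq; lra.
  - pose proof (Gmax_increasing _ Hc _ _ Hs).
    rewrite !Ghat_eq by lra; lra.
Qed.
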